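(* Let $S$ be a sticky tree and let $F$ be the forest obtained by deleting the root of $S$, i.e. the ordered list (left to right) of the subtrees rooted at the children of the root of $S$. Define $f(v)=c(v)-1$ for every node $v$ of $F$, where $c$ is the certificate-counting function of $S$. Then $f$ is a closed flow on $F$.
   Context: Sticky trees: a plane tree is a rooted tree in which the children of every node are linearly ordered (left to right). The root has depth $0$, a child of a node of depth $d$ has depth $d+1$. The prefix order is: the root, followed by the prefix order of the subtree of its leftmost child, then of its second child, and so on. $S_u$ denotes the subtree rooted at $u$. A sticky tree is a plane tree $S$ with node set $V$ and a labeling $\ell:V\to\mathbb{N}$ such that: (1) every node $u$ of depth $d$ has $0\le\ell(u)\le d$; (2) every node $u$ of depth $d>0$ has some $v\in S_u$ (possibly $v=u$) with $\ell(v)<d$; (3) for every node $u$ of depth $d$, if some $v\in S_u$ has $\ell(v)=d$, then every node of $S_u$ (including $u$) preceding $v$ in prefix order has label at least $d$. The certificate of a non-root node $u$ of depth $d$ is the first node, in prefix order, of $S_u$ whose label is $<d$. The certificate-counting function $c:V\to\mathbb{N}$ assigns to each node $w$ the number of non-root nodes whose certificate is $w$. Flows: a forest is an ordered list $(A_1,\dots,A_k)$ of plane trees. A flow on a forest $F$ is an integer-valued function $f$ on its nodes with $f(v)\ge -1$ for every node $v$ and such that the outgoing rate of every node is nonnegative, where the outgoing rate of $v$ is $\sum_{w} f(w)$ over all nodes $w$ of the subtree of $F$ rooted at $v$ (including $v$). A flow is closed if the outgoing rate of the root of every $A_i$ is $0$. *)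

From mathcomp Require Import all_boot all_order all_algebra.
Set Implicit Arguments. Unset Strict Implicit. Unset Printing Implicit Defensive.
Import Order.TTheory GRing.Theory Num.Theory.

Inductive tree : Type := Node of seq tree.

(* Nodes are identified by their Dewey address (seq nat): the root is [::],
   the i-th child (0-based, left to right) of the node at address p is at p ++ [:: i].
   The depth of the node at address u is size u. *)

Fixpoint preorder (t : tree) : seq (seq nat) :=
  let: Node ts := t in
  [::] :: (fix aux (i : nat) (ts : seq tree) : seq (seq nat) :=
             match ts with
             | [::] => [::]
             | t' :: ts' => map (cons i) (preorder t') ++ aux i.+1 ts'
             end) 0 ts.

Definition nodes (S : tree) : seq (seq nat) := preorder S.

Fixpoint subtree_at (t : tree) (p : seq nat) : option tree :=
  match p with
  | [::] => Some t
  | i :: p' =>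
      let: Node ts := t in
      (fix get (ts : seq tree) (j : nat) : option tree :=
         match ts, j with
         | [::], _ => None
         | t' :: _, 0 => subtree_at t' p'
         | _ :: ts', j'.+1 => get ts' j'
         end) ts i
  end.

Definition sub_nodes (S : tree) (u : seq nat) : seq (seq nat) :=
  match subtree_at S u with
  | Some T => map (cat u) (preorder T)
  | None => [::]
  end.

Definition before (s : seq (seq nat)) (w v : seq nat) : bool :=
  index w s < index v s.

Definition is_sticky (S : tree) (l : seq nat -> nat) : Prop :=
  (forall u, u \in nodes S -> l u <= size u) /\
  (forall u, u \in nodes S -> 0 < size u ->
     exists2 v, v \in sub_nodes S u & l v < size u) /\
  (forall u, u \in nodes S ->
     forall v, v \in sub_nodes S u -> l v = size u ->
     forall w, w \in sub_nodes S u -> before (sub_nodes S u) w v ->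
       size u <= l w).

Definition certificate (S : tree) (l : seq nat -> nat) (u : seq nat) : seq nat :=
  nth [::] (sub_nodes S u) (find (fun v => l v < size u) (sub_nodes S u)).

Definition cert_count (S : tree) (l : seq nat -> nat) (w : seq nat) : nat :=
  count (fun u => (u != [::]) && (certificate S l u == w)) (nodes S).

(* Forests: ordered lists of plane trees.  The node at address p of the
   i-th tree A_i is given address i :: p. *)
Definition forest := seq tree.

Definition forest_nodes (F : forest) : seq (seq nat) :=
  flatten [seq map (cons i) (preorder (nth (Node [::]) F i)) | i <- iota 0 (size F)].

Definition out_rate (F : forest) (f : seq nat -> int) (v : seq nat) : int :=
  (\sum_(w <- forest_nodes F | prefix v w) f w)%R.

Definition is_flow (F : forest) (f : seq nat -> int) : Prop :=
  (forall v, v \in forest_nodes F -> (-1 <= f v)%R) /\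
  (forall v, v \in forest_nodes F -> (0 <= out_rate F f v)%R).

Definition is_closed_flow (F : forest) (f : seq nat -> int) : Prop :=
  is_flow F f /\ (forall i, i < size F -> out_rate F f [:: i] = 0%R).

(* The forest obtained by deleting the root: node i :: p of the forest is
   the node with the same address i :: p in S. *)
Definition delete_root (S : tree) : forest := let: Node ts := S in ts.

From mathcomp Require Import all_boot all_order all_algebra.
Set Implicit Arguments. Unset Strict Implicit. Unset Printing Implicit Defensive.
Import Order.TTheory GRing.Theory Num.Theory.

(** The outgoing rate of a non-root node v is the number of nodes of F whose
   certificate lies in S_v, minus the number of nodes of F lying in S_v.  A
   certificate always lies in the subtree of its node, so every node of S_v is
   counted in the first number: the rate is nonnegative.  At the root of a
   tree A_i of F the converse also holds, since a node and its certificate lie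
   in the same A_i: the rate vanishes. *)

Fixpoint preorder_from (i : nat) (ts : seq tree) : seq (seq nat) :=
  match ts with
  | [::] => [::]
  | t :: ts' => map (cons i) (preorder t) ++ preorder_from i.+1 ts'
  end.

Lemma preorder_NodeE ts : preorder (Node ts) = [::] :: preorder_from 0 ts.
Proof. by []. Qed.

Lemma tree_nth_ind (P : tree -> Prop) :
  (forall ts, (forall i, i < size ts -> P (nth (Node [::]) ts i)) -> P (Node ts)) ->
  forall t, P t.
Proof.
move=> IHnode; fix IH 1 => -[ts]; apply: IHnode.
(* [done] must be avoided here: it would close goals with the unguarded [IH]. *)
elim: ts => [|t ts IHts] [|i] lt_i.
1, 2: exact: False_ind _ (notF lt_i).
- exact: IH.
- exact: IHts.
Qed.

Lemma preorder_fromE k ts :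
  preorder_from k ts =
  flatten [seq map (cons (k + i)) (preorder (nth (Node [::]) ts i))
          | i <- iota 0 (size ts)].
Proof.
elim: ts k => [|t ts IH] k //=.
rewrite addn0 IH -(addn0 1) iotaDl -map_comp; congr (_ ++ flatten _).
by apply: eq_map => i /=; rewrite add0n addnA addn1.
Qed.

Lemma forest_nodesE ts : forest_nodes ts = preorder_from 0 ts.
Proof. by rewrite preorder_fromE. Qed.

Lemma nodes_NodeE ts : nodes (Node ts) = [::] :: forest_nodes ts.
Proof. by rewrite forest_nodesE. Qed.

Lemma preorder_fromP k ts x :
  x \in preorder_from k ts -> exists j p, x = j :: p /\ k <= j.
Proof.
elim: ts k => [|t ts IH] k //=.
rewrite mem_cat => /orP[/mapP[p _ ->]|/IH[j [p [-> lt_k_j]]]].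
  by exists k, p.
by exists j, p; split; [|apply: ltnW].
Qed.

Lemma mem_preorder_from k ts j q :
  j < size ts -> q \in preorder (nth (Node [::]) ts j) ->
  (k + j) :: q \in preorder_from k ts.
Proof.
elim: ts k j => [|t ts IH] k [|j] //= lt_j_ts q_in.
  by rewrite addn0 mem_cat map_f.
by rewrite mem_cat -addSnnS IH ?orbT.
Qed.

Lemma forest_nodes_neq0 ts v : v \in forest_nodes ts -> v != [::].
Proof. by rewrite forest_nodesE => /preorder_fromP[j [p [->]]]. Qed.

Lemma uniq_preorder t : uniq (preorder t).
Proof.
elim/tree_nth_ind: t => ts IH; rewrite preorder_NodeE /=.
apply/andP; split; first by apply/negP => /preorder_fromP[j [p []]].
elim: ts IH 0 => [|t ts IHts] IH k //=.
rewrite cat_uniq map_inj_uniq ?(IH 0) //=; last by move=> x y [].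
apply/andP; split; last by apply: IHts => i; apply: (IH i.+1).
apply/hasPn => x /preorder_fromP[j [p [-> lt_k_j]]].
by apply/mapP => -[q _ [eq_jk _]]; rewrite eq_jk ltnn in lt_k_j.
Qed.

Lemma uniq_forest_nodes ts : uniq (forest_nodes ts).
Proof.
by have := uniq_preorder (Node ts); rewrite -/(nodes _) nodes_NodeE => /andP[].
Qed.

Lemma subtree_at_cons ts i p :
  subtree_at (Node ts) (i :: p) =
  if i < size ts then subtree_at (nth (Node [::]) ts i) p else None.
Proof. by elim: ts i => [|t ts IH] [|i] //=; rewrite -IH. Qed.

Lemma mem_preorder_subtree_at S u T p :
  subtree_at S u = Some T -> p \in preorder T -> u ++ p \in preorder S.
Proof.
elim: u S => [|i u IH] [ts]; first by move=> [<-].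
rewrite subtree_at_cons; case: ifP => // lt_i_ts sub_u p_in.
by rewrite preorder_NodeE inE -(add0n i) mem_preorder_from // IH ?orbT.
Qed.

Lemma mem_sub_nodes S u w :
  w \in sub_nodes S u -> (w \in nodes S) && prefix u w.
Proof.
rewrite /sub_nodes; case sub_u: (subtree_at S u) => [T|] //.
move=> /mapP[p p_in ->].
by rewrite prefix_prefix andbT (mem_preorder_subtree_at sub_u).
Qed.

Lemma certificate_sub_nodes S l u :
  is_sticky S l -> u \in nodes S -> u != [::] ->
  certificate S l u \in sub_nodes S u.
Proof.
move=> [_ [has_small _]] u_in u_neq0.
have [v v_in lt_lv] : exists2 v, v \in sub_nodes S u & l v < size u.
  by apply: has_small; rewrite ?lt0n ?size_eq0.
by rewrite /certificate mem_nth // -has_find; apply/hasP; exists v.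
Qed.

Lemma sum_count_fibers (T U : eqType) (s : seq T) (t : seq U)
    (P : pred T) (Q : pred U) (g : U -> T) :
  uniq s ->
  \sum_(w <- s | P w) count (fun u => Q u && (g u == w)) t =
  count (fun u => Q u && (g u \in filter P s)) t.
Proof.
move=> s_uniq; elim: t => [|x t IH] /=; first by rewrite big1.
rewrite big_split /= IH; congr (_ + _); case: (Q x) => /=; last by rewrite big1.
rewrite -(count_uniq_mem _ (filter_uniq P s_uniq)) count_filter -sum1_count.
rewrite big_mkcond [RHS]big_mkcond; apply: eq_bigr => w _.
by rewrite /= eq_sym; case: (P w); case: (w == g x).
Qed.

Section CertificateFlow.

Variables (ts : seq tree) (l : seq nat -> nat).
Hypothesis sticky : is_sticky (Node ts) l.

Local Notation cert := (certificate (Node ts) l).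
Local Notation F := (forest_nodes ts).
Local Notation flow := (fun v => ((cert_count (Node ts) l v)%:Z - 1)%R).

Lemma certificate_forest_node u : u \in F -> (cert u \in F) && prefix u (cert u).
Proof.
move=> u_in; have u_neq0 := forest_nodes_neq0 u_in.
have := certificate_sub_nodes sticky _ u_neq0.
rewrite nodes_NodeE inE u_in orbT => /(_ isT) /mem_sub_nodes.
rewrite nodes_NodeE inE => /andP[/orP[/eqP c_eq0|-> //] pre_u].
by move: pre_u u_neq0; rewrite c_eq0; case: (u).
Qed.

Lemma out_rate_certificates v :
  out_rate ts flow v =
  ((count (fun u => prefix v (cert u)) F)%:Z - (count (prefix v) F)%:Z)%R.
Proof.
rewrite /out_rate sumrB -!(big_morph Posz PoszD (erefl (Posz 0))) sum1_count.
congr (Posz _ - _)%R.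
rewrite /cert_count (nodes_NodeE ts) sum_count_fibers ?uniq_forest_nodes //=.
apply: eq_in_count => u u_in.
have /andP[c_in _] := certificate_forest_node u_in.
by rewrite (forest_nodes_neq0 u_in) mem_filter c_in andbT.
Qed.

Lemma out_rate_ge0 v : (0 <= out_rate ts flow v)%R.
Proof.
rewrite out_rate_certificates subr_ge0 lez_nat.
apply: (@leq_trans (count (fun u => prefix v u || prefix v (cert u)) F)).
  by apply: sub_count => u /= ->.
apply/eq_leq/eq_in_count => u /certificate_forest_node /andP[_ pre_u] /=.
by case pre_vu: (prefix v u) => //=; rewrite (prefix_trans pre_vu pre_u).
Qed.

Lemma out_rate_root i : out_rate ts flow [:: i] = 0%R.
Proof.
rewrite out_rate_certificates; apply/eqP; rewrite subr_eq0 eqz_nat.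
apply/eqP/eq_in_count => u u_in /=.
have /andP[_ /prefixP[q ->]] := certificate_forest_node u_in.
move: (forest_nodes_neq0 u_in); case: u {u_in} => // j p _.
by rewrite !prefix_cons !prefix0s.
Qed.

End CertificateFlow.

Theorem mainTheorem5 (S : tree) (l : seq nat -> nat) :
  is_sticky S l ->
  is_closed_flow (delete_root S)
    (fun v => ((cert_count S l v)%:Z - 1)%R).
Proof.
case: S => ts sticky; split; first split.
- by move=> v _; rewrite lerBrDr addNr.
- by move=> v _; apply: out_rate_ge0.
- by move=> i _; apply: out_rate_root.
Qed.
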